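(* Let $P$ be a finite nonempty set of nonempty linear strings over an ordered finite alphabet $\Sigma$. Let $w_o$ be a shortest linear superstring of $P$, let $c_o$ be a shortest circular superstring of $P\cup\overline P$, and let $c$ be any circular superstring of $P\cup\overline P$. Then $$\frac{|g(c)|}{|w_o|}\le\frac{|c|}{|c_o|}\quad\text{and}\quad \frac{\|P\|-|w_o|}{\|P\|-|g(c)|}\le \frac{\|P\cup\overline P\|-|c_o|}{\|P\cup\overline P\|-|c|}.$$
   Context: $\|Q\|=\sum_{w\in Q}|w|$. Let $\overline\Sigma=\{\overline a:a\in\Sigma\}$ be a disjoint copy of $\Sigma$. The alphabet $\Sigma\cup\overline\Sigma$ is totally ordered so that $a<\overline b$ for all $a\in\Sigma$ and $\overline b\in\overline\Sigma$. For $w=a_1\dots a_k$ over $\Sigma$, set $\overline w=\overline{a_1}\dots\overline{a_k}$, and let $\overline P=\{\overline w:w\in P\}$. A circular string $\langle a_1\dots a_n\rangle$ has length $n$, and its substrings are the finite substrings of $(a_1\dots a_n)^\infty$. Superstrings (linear or circular) contain each string of the given set as a substring. For a circular superstring $c$ of $P\cup\overline P$ of length $k$, let $l(c)$ be the lexicographically smallest among the circular shifts of $c$ (read as linear strings) whose first letter is in $\Sigma$ and whose last letter is in $\overline\Sigma$. For a linear string $w$ and a sub-alphabet $\Sigma''$, $w|_{\Sigma''}$ is the subsequence of letters of $w$ lying in $\Sigma''$. Let $g'(c)$ be whichever of $l(c)|_\Sigma$ and $l(c)|_{\overline\Sigma}$ has minimal length. Then set $g(c)=a_1\dots a_k$ if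 either $g'(c)=a_1\dots a_k\in\Sigma^*$ or $g'(c)=\overline{a_1}\dots\overline{a_k}\in\overline\Sigma^*$. *)

From mathcomp Require Import all_boot all_order all_algebra.
Set Implicit Arguments. Unset Strict Implicit. Unset Printing Implicit Defensive.
Import Order.TTheory GRing.Theory Num.Theory.

Section Strings.
Context {disp : Order.disp_t} {S : finOrderType disp}.

(* Letters of Sigma ∪ Sigma-bar: (false, a) is a ∈ Sigma, (true, a) is a-bar. *)
Definition xletter := (bool * S)%type.

Definition in_sig (x : xletter) : bool := ~~ x.1.
Definition in_bar (x : xletter) : bool := x.1.

Definition xlt (x y : xletter) : bool :=
  (~~ x.1 && y.1) || ((x.1 == y.1) && (x.2 < y.2)%O).

Fixpoint lexle (s t : seq xletter) : bool :=
  match s, t with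
  | [::], _ => true
  | _ :: _, [::] => false
  | a :: s', b :: t' => xlt a b || ((a == b) && lexle s' t')
  end.

Definition emb (w : seq S) : seq xletter := [seq (false, a) | a <- w].
Definition bar (w : seq S) : seq xletter := [seq (true, a) | a <- w].

Definition norm_set {T : Type} (Q : seq (seq T)) : nat := sumn [seq size w | w <- Q].

(* P ∪ P-bar, as a duplicate-free list (P given as a duplicate-free list) *)
Definition PPbar (P : seq (seq S)) : seq (seq xletter) :=
  undup (map emb P ++ map bar P).

Definition lin_super {T : eqType} (Q : seq (seq T)) (w : seq T) : Prop :=
  forall p, p \in Q -> infix p w.

(* u is a substring of the circular string <c>: a finite substring of c^∞ *)
Definition circ_sub {T : eqType} (u c : seq T) : Prop :=
  exists k, infix u (flatten (nseq k c)).

(* circular superstring, a circular string being represented by any of its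
   linear representatives *)
Definition circ_super {T : eqType} (Q : seq (seq T)) (c : seq T) : Prop :=
  forall p, p \in Q -> circ_sub p c.

Definition lexmin (d : seq xletter) (s : seq (seq xletter)) : seq xletter :=
  foldr (fun t acc => if lexle t acc then t else acc) (head d s) s.

(* l(c): lexicographically smallest circular shift of c whose first letter is
   in Sigma and last letter in Sigma-bar (default c if there is none) *)
Definition lshift (c : seq xletter) : seq xletter :=
  lexmin c [seq r <- [seq rot i c | i <- iota 0 (size c)]
           | match r with
             | [::] => false
             | a :: _ => in_sig a && in_bar (last a r)
             end].

Definition gmap (c : seq xletter) : seq S :=
  let l := lshift c in
  let ls := filter in_sig l in
  let lb := filter in_bar l in
  map snd (if size ls <= size lb then ls else lb).

End Strings.

(* The map g keeps the smaller of the two halves l(c)|_Sigma, l(c)|_Sigma-bar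
   of a rotation of c, so 2|g(c)| <= |c|. Conversely w_o followed by its barred
   copy is a circular superstring of P ∪ P-bar, so |c_o| <= 2|w_o|; and
   |c_o| <= |c| by minimality. Since ||P ∪ P-bar|| = 2||P||, both inequalities
   are instances of one comparison of fractions whose numerators and
   denominators differ by a factor of at most two. *)
From Pilot Require Import Defs.
From mathcomp Require Import all_boot all_order all_algebra.
Set Implicit Arguments. Unset Strict Implicit. Unset Printing Implicit Defensive.
Import Order.TTheory GRing.Theory Num.Theory.
Local Open Scope ring_scope.

Lemma ler_pdiv_double (R : realFieldType) (x y X Y : R) :
  0 < Y -> Y <= 2 * y -> 2 * x <= X -> 0 <= X -> x / y <= X / Y.
Proof.
move=> Y_gt0 Y_le2y le2x_X X_ge0.
have y_gt0 : 0 < y by rewrite -(pmulr_rgt0 _ (ltr0Sn R 1)) (lt_le_trans Y_gt0).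
have [x_le0 | x_gt0] := lerP x 0.
  apply: (le_trans (y := 0)); first by rewrite mulr_le0_ge0 // invr_ge0 ltW.
  by rewrite divr_ge0 // ltW.
rewrite ler_pdivrMr // mulrAC ler_pdivlMr //.
apply: (le_trans (y := x * (2 * y))); first by rewrite ler_wpM2l // ltW.
by rewrite mulrA [x * 2]mulrC ler_wpM2r // ltW.
Qed.

Lemma infix_map (T U : eqType) (f : T -> U) (p w : seq T) :
  infix p w -> infix (map f p) (map f w).
Proof. by move/infixP=> [s [s' ->]]; rewrite !map_cat infix_infix. Qed.

Section Superstrings.
Variable T : eqType.

Lemma infix_circ_sub (u c : seq T) : infix u c -> circ_sub u c.
Proof. by exists 1%N; rewrite /= cats0. Qed.

Lemma circ_sub_nil (u : seq T) : circ_sub u [::] -> u = [::].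
Proof. by case=> k; rewrite (_ : flatten _ = [::]) ?infixs0 => [/eqP|]; elim: k. Qed.

Lemma circ_super_size_gt0 (Q : seq (seq T)) u c :
  u \in Q -> u != [::] -> circ_super Q c -> (0 < size c)%N.
Proof.
move=> uQ u_neq0 /(_ u uQ); rewrite lt0n size_eq0.
by case: eqP => // -> /circ_sub_nil /eqP; rewrite (negPf u_neq0).
Qed.

End Superstrings.

Section LetterCopies.
Context {disp : Order.disp_t} {S : finOrderType disp}.
Implicit Types (w : seq S) (c : seq (@xletter disp S)).

Lemma mem_lexmin (d : seq (@xletter disp S)) s : lexmin d s \in d :: s.
Proof.
have mem_fold z : foldr (fun t acc => if lexle t acc then t else acc) z s \in z :: s.
  elim: s => [|a s IHs] /=; first exact: mem_head.
  case: ifP => _; first by rewrite !inE eqxx orbT.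
  move: IHs; rewrite !inE => /orP[->|->]; by rewrite ?orbT.
move: (mem_fold (head d s)); rewrite /lexmin inE => /orP[/eqP-> |]; last by rewrite inE orbC => ->.
by case: s {mem_fold} => [|a s]; rewrite !inE eqxx ?orbT.
Qed.

Lemma size_lshift c : size (Defs.lshift c) = size c.
Proof.
rewrite /Defs.lshift; set rots := filter _ _.
have /predU1P[-> // | ] := mem_lexmin c rots.
by move/(mem_subseq (filter_subseq _ _))/mapP => -[i _ ->]; rewrite size_rot.
Qed.

Lemma size_gmap c : ((size (gmap c)).*2 <= size c)%N.
Proof.
rewrite /gmap size_map -(size_lshift c); set l := Defs.lshift c.
have split_l : (size (filter in_sig l) + size (filter in_bar l))%N = size l.
  rewrite !size_filter -(count_predC in_sig l); congr (_ + _)%N.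
  by apply: eq_count => x; rewrite /= /in_sig /in_bar negbK.
case: ifP => le_sig_bar; rewrite -split_l -addnn.
  by rewrite leq_add2l.
by rewrite leq_add2r ltnW // ltnNge le_sig_bar.
Qed.

Lemma emb_inj : injective (@emb disp S).
Proof. by move=> w w' /(congr1 (map snd)); rewrite -!map_comp !map_id. Qed.

Lemma bar_inj : injective (@bar disp S).
Proof. by move=> w w' /(congr1 (map snd)); rewrite -!map_comp !map_id. Qed.

Lemma emb_neq_bar w w' : w != [::] -> emb w != bar w'.
Proof. by case: w => [|a w] //= _; case: w'. Qed.

Lemma norm_PPbar (P : seq (seq S)) : uniq P -> all (fun w => w != [::]) P ->
  norm_set (PPbar P) = (norm_set P).*2.
Proof.
move=> uniqP /allP nonnilP; rewrite /PPbar undup_id; last first.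
  rewrite cat_uniq !map_inj_uniq ?uniqP ?andbT //=; try exact: emb_inj; try exact: bar_inj.
  apply/hasPn => _ /mapP[w' _ ->]; apply/mapP => -[w /nonnilP w_neq0].
  by apply/eqP; rewrite eq_sym emb_neq_bar.
rewrite /norm_set map_cat sumn_cat -!map_comp -addnn.
by congr (sumn _ + sumn _)%N; apply: eq_map => w /=; rewrite size_map.
Qed.

Lemma circ_super_emb_bar (P : seq (seq S)) w :
  lin_super P w -> circ_super (PPbar P) (emb w ++ bar w).
Proof.
move=> wP q; rewrite mem_undup mem_cat => /orP[] /mapP[p /wP pw ->];
  apply: infix_circ_sub; first exact/infix_catr/infix_map.
exact/infix_catl/infix_map.
Qed.

End LetterCopies.

Theorem lemma6 (disp : Order.disp_t) (S : finOrderType disp)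
  (P : seq (seq S)) (w_o : seq S) (c_o c : seq (@xletter disp S)) :
  uniq P -> P != [::] -> all (fun w => w != [::]) P ->
  lin_super P w_o ->
  (forall w, lin_super P w -> (size w_o <= size w)%N) ->
  circ_super (PPbar P) c_o ->
  (forall c', circ_super (PPbar P) c' -> (size c_o <= size c')%N) ->
  circ_super (PPbar P) c ->
  ((size (gmap c))%:R / (size w_o)%:R <= (size c)%:R / (size c_o)%:R :> rat)
  /\
  ((size c < norm_set (PPbar P))%N ->
   ((norm_set P)%:R - (size w_o)%:R) / ((norm_set P)%:R - (size (gmap c))%:R)
   <= ((norm_set (PPbar P))%:R - (size c_o)%:R)
      / ((norm_set (PPbar P))%:R - (size c)%:R) :> rat).
Proof.
move=> uniqP P_neq0 nonnilP w_oP _ c_oP c_o_min cP.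
have le_g_c := size_gmap c.
have le_c_o_c : (size c_o <= size c)%N by exact: c_o_min.
have le_c_o_w_o : (size c_o <= (size w_o).*2)%N.
  by have := c_o_min _ (circ_super_emb_bar w_oP); rewrite size_cat !size_map addnn.
have c_o_gt0 : (0 < size c_o)%N.
  have [p pP] : exists p, p \in P.
    by case E: P P_neq0 => [|p P'] // _; exists p; rewrite mem_head.
  apply: (circ_super_size_gt0 (u := emb p)) c_oP; first by rewrite mem_undup mem_cat map_f.
  by move/allP: nonnilP => /(_ p pP); case: p {pP}.
have nat2 (n : nat) : (n.*2)%:R = 2 * n%:R :> rat by rewrite -mul2n natrM.
split.
  by apply: ler_pdiv_double; rewrite ?ltr0n // -nat2 ler_nat.
rewrite norm_PPbar // => lt_c_N.
apply: ler_pdiv_double; rewrite ?subr_gt0 ?subr_ge0 ?ltr_nat ?ler_nat //.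
  by rewrite mulrBr -!nat2 lerB ?ler_nat.
by rewrite mulrBr -!nat2 lerB ?ler_nat.
exact: leq_trans le_c_o_c (ltnW lt_c_N).
Qed.
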